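(* Let $\{M_p\mid p\in P\}$ be a Morse decomposition of a multivector field on a finite simplicial complex $K$, and let $\sigma_1,\dots,\sigma_n$ and $\sigma'_1,\dots,\sigma'_n$ be two admissible enumerations of $K$ which are Morse fixed, i.e. for every $p\in P$ the orders they induce on $M_p$ coincide. Let $A$ and $A'$ be the corresponding filtered boundary matrices and $A_{out}$, $A'_{out}$ the matrices produced by the reduction phase of ConMat on $A$ and $A'$. Then $A_{out}[i,j]=A'_{out}[i',j']$ whenever $\sigma_i=\sigma'_{i'}$ and $\sigma_j=\sigma'_{j'}$. Furthermore, if $j$ is a homogeneous column of $A_{out}$ with pivot row $\ell$, and $\sigma'_{j'}=\sigma_j$, $\sigma'_{\ell'}=\sigma_\ell$, then $j'$ is a homogeneous column of $A'_{out}$ with pivot row $\ell'$.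
   Context: $K$ is a finite simplicial complex ($\tau\le\sigma$: $\tau$ is a face of $\sigma$; $\mathrm{cl}(\sigma)=\{\tau:\tau\le\sigma\}$). A multivector field $\mathcal V$ on $K$ is a partition of $K$ into convex sets $V$ (if $\sigma,\tau\in V$ and $\sigma\le\mu\le\tau$ then $\mu\in V$); $[\sigma]_{\mathcal V}$ is the part containing $\sigma$, $F_{\mathcal V}(\sigma)=[\sigma]_{\mathcal V}\cup\mathrm{cl}(\sigma)$, and a path is a sequence $\sigma_1,\dots,\sigma_r$ with $\sigma_k\in F_{\mathcal V}(\sigma_{k-1})$. A Morse decomposition indexed by a finite poset $(P,\le_P)$ is a partition $K=\bigsqcup_{p\in P}M_p$ such that every path from $M_p$ to $M_q$ has $q\le_P p$; $[\sigma]_P$ is the $p$ with $\sigma\in M_p$. An admissible enumeration is $\sigma_1,\dots,\sigma_n$ of all simplices of $K$ such that (a) for some linear extension $\le_{lin}$ of $\le_P$, $i\le j\Rightarrow[\sigma_i]_P\le_{lin}[\sigma_j]_P$; (b) if $\sigma_i$ is a proper face of $\sigma_j$ then $i<j$. Different admissible enumerations may use different linear extensions. The filtered boundary matrix is the $n\times n$ $\mathbb Z_2$-matrix with entry $(i,j)$ equal to $1$ iff $\sigma_i$ is a codimension-one face of $\sigma_j$; row/column $i$ represents $\sigma_i$. For a nonzero column $j$ of a matrix $B$, its pivot row $\mathrm{low}_B(j)$ is the largest $i$ with $B[i,j]=1$; column $j$ is homogeneous if nonzero and $\sigma_j$, $\sigma_{\mathrm{low}_B(j)}$ are in the same Morse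 set. ConMat reduction phase on $A$ (in place): for $j=1,\dots,n$: for $i=\mathrm{low}_A(j)$ down to $1$: if $A[i,j]=1$ and some column $s<j$ of the current matrix is homogeneous with $\mathrm{low}_A(s)=i$, add column $s$ to column $j$ (mod 2). The result is $A_{out}$. *)

From mathcomp Require Import all_boot all_order.
Set Implicit Arguments. Unset Strict Implicit. Unset Printing Implicit Defensive.
Import Order.TTheory.
Local Open Scope order_scope.

Section Complex.
Variable V : finType.
Implicit Types (K : {set {set V}}) (sigma tau : {set V}).

Definition simplicial_complex K : Prop :=
  set0 \notin K /\
  (forall sigma tau, sigma \in K -> tau != set0 -> tau \subset sigma -> tau \in K).

Definition cl K sigma : {set {set V}} := [set tau in K | tau \subset sigma].

Definition codim1_face sigma tau : bool :=
  (tau \subset sigma) && (#|sigma| == #|tau|.+1).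

Definition convex K (A : {set {set V}}) : Prop :=
  forall sigma tau mu, sigma \in A -> tau \in A -> mu \in K ->
    sigma \subset mu -> mu \subset tau -> mu \in A.

Definition multivector_field K (Vs : {set {set {set V}}}) : Prop :=
  partition Vs K /\ forall A, A \in Vs -> convex K A.

Definition Fmv K (Vs : {set {set {set V}}}) sigma : {set {set V}} :=
  pblock Vs sigma :|: cl K sigma.

Definition mv_path K Vs (x : {set V}) (s : seq {set V}) : bool :=
  (x \in K) && path (fun a b => b \in Fmv K Vs a) x s.

(** Morse decomposition indexed by the finite poset P: the Morse set of
    sigma is [sigma]_P = m sigma, i.e. M_p = [set sigma in K | m sigma == p]. *)
Definition morse_decomposition (d : Order.disp_t) (P : finPOrderType d)
    K Vs (m : {set V} -> P) : Prop :=
  forall x s, mv_path K Vs x s -> m (last x s) <= m x.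

Definition linear_extension (d : Order.disp_t) (P : finPOrderType d)
    (le : rel P) : Prop :=
  reflexive le /\ antisymmetric le /\ transitive le /\ total le /\
  (forall p q : P, p <= q -> le p q).

Definition enumeration K (s : seq {set V}) : Prop :=
  uniq s /\ [set x in s] = K.

Definition admissible (d : Order.disp_t) (P : finPOrderType d) K
    (m : {set V} -> P) (s : seq {set V}) : Prop :=
  enumeration K s /\
  (exists le : rel P, linear_extension le /\
     forall i j, i < size s -> j < size s -> (i <= j)%N ->
       le (m (nth set0 s i)) (m (nth set0 s j))) /\
  (forall i j, i < size s -> j < size s ->
     nth set0 s i \proper nth set0 s j -> (i < j)%N).

Definition morse_fixed (d : Order.disp_t) (P : finPOrderType d) K
    (m : {set V} -> P) (s s' : seq {set V}) : Prop :=
  forall sigma tau, sigma \in K -> tau \in K -> m sigma = m tau ->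
    (index sigma s < index tau s)%N = (index sigma s' < index tau s')%N.

(** * Z_2 matrices: entries are booleans (true = 1), addition is xor.
    Rows/columns are indexed 0 .. n-1 (0-based version of 1 .. n). *)
Definition mat := nat -> nat -> bool.

Definition boundary_matrix (s : seq {set V}) : mat :=
  fun i j => [&& (i < size s)%N, (j < size s)%N &
              codim1_face (nth set0 s j) (nth set0 s i)].

Variable n : nat.

Definition nonzero_col (M : mat) j : bool := [exists i : 'I_n, M i j].

(** pivot row: largest i with M[i,j] = 1 (meaningful for nonzero columns) *)
Definition low (M : mat) j : nat := \max_(i < n | M i j) i.

Variables (d : Order.disp_t) (P : finPOrderType d) (m : {set V} -> P)
          (s : seq {set V}).

Definition homogeneous (M : mat) j : bool :=
  nonzero_col M j && (m (nth set0 s j) == m (nth set0 s (low M j))).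

Definition addcol (M : mat) (src j : nat) : mat :=
  fun r c => if c == j then xorb (M r j) (M r src) else M r c.

Definition pivcol (M : mat) j i : option nat :=
  let k := find (fun c => homogeneous M c && (low M c == i)) (iota 0 j) in
  if (k < j)%N then Some k else None.

Definition red_step (M : mat) j i : mat :=
  if M i j then
    match pivcol M j i with Some c => addcol M c j | None => M end
  else M.

Fixpoint red_inner (M : mat) j k : mat :=
  match k with
  | 0 => M
  | k'.+1 => red_inner (red_step M j k') j k'
  end.

Fixpoint red_outer (M : mat) j : mat :=
  match j with
  | 0 => M
  | j'.+1 =>
      let M1 := red_outer M j' in
      red_inner M1 j' (if nonzero_col M1 j' then (low M1 j').+1 else 0)
  end.

Definition conmat_reduce (A : mat) : mat := red_outer A n.

End Complex.

From mathcomp Require Import all_boot all_order.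
Set Implicit Arguments. Unset Strict Implicit. Unset Printing Implicit Defensive.
Import Order.TTheory.

(* Every nonzero entry (i, j) of the boundary matrix, and of all its partial
   reductions, satisfies m sigma_i <= m sigma_j, because a face is reachable from
   its coface along a path.  The reduction of column j only adds earlier
   homogeneous columns whose Morse index is at most that of sigma_j, and it leaves
   column j zero at the pivots of all earlier homogeneous columns.  For such pairs
   of columns both enumerations agree on which one comes first: inside a Morse set
   by Morse fixedness, across Morse sets because both extend the order of P.
   Hence, by induction on j, the difference of the two versions of column j is a
   sum of earlier homogeneous columns vanishing at all their pivots; since
   homogeneous columns have pairwise distinct pivots, such a sum is zero. *)

Section Columns.
Variable n : nat.
Implicit Types (M N : mat) (i j : nat).

Lemma leq_low M i j : M i j -> i < n -> i <= low n M j.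
Proof.
move=> Mij lt_in.
exact: (@leq_bigmax_cond _ (fun k : 'I_n => M k j) (@nat_of_ord n) (Ordinal lt_in)).
Qed.

Lemma nonzero_colW M i j : M i j -> i < n -> nonzero_col n M j.
Proof. by move=> Mij lt_in; apply/existsP; exists (Ordinal lt_in). Qed.

Lemma low_nonzero_col M j :
  nonzero_col n M j -> M (low n M j) j /\ low n M j < n.
Proof.
case/existsP=> i0 Mi0j; rewrite /low.
have [|i Mij ->] := @eq_bigmax_cond _ (fun k : 'I_n => M k j) (@nat_of_ord n).
  by apply/card_gt0P; exists i0.
by split.
Qed.

Lemma entry_above_low M i j : low n M j < i -> i < n -> M i j = false.
Proof.
by move=> lt_low_i lt_in; apply/negP => /leq_low/(_ lt_in); rewrite leqNgt lt_low_i.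
Qed.

Lemma eq_nonzero_col M N j :
  (forall i, M i j = N i j) -> nonzero_col n M j = nonzero_col n N j.
Proof. by move=> eqMN; apply: eq_existsb => i; rewrite eqMN. Qed.

Lemma eq_low M N j : (forall i, M i j = N i j) -> low n M j = low n N j.
Proof. by move=> eqMN; apply: eq_bigl => i; rewrite eqMN. Qed.

Definition colsum M (T : seq nat) i := \big[addb/false]_(c <- T) M i c.

Lemma colsum_parity M T c0 i : colsum M T i =
  (odd (count_mem c0 T) && M i c0) (+) colsum M (filter (predC1 c0) T) i.
Proof.
rewrite /colsum; elim: T => [|c T IH]; first by rewrite !big_nil.
rewrite /= big_cons IH; case: eqP => [->|_] /=; last by rewrite big_cons addbCA.
by case: (odd _); case: (M i c0); case: (\big[_/_]_(_ <- _) _).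
Qed.

End Columns.

Section Reduction.
Variables (V : finType) (d : Order.disp_t) (P : finPOrderType d)
  (m : {set V} -> P) (n : nat) (s : seq {set V}).

Local Notation hom := (homogeneous n m s).
Local Notation mi i := (m (nth set0 s i)).

Definition morse_upper (M : mat) := forall i j, M i j ->
  [/\ i < n, j < n & (mi i <= mi j)%O].

Definition valid_addends (M : mat) j (T : seq nat) :=
  forall c, c \in T -> [/\ c < j, hom M c & (mi c <= mi j)%O].

Lemma homogeneous_low (M : mat) j :
  hom M j -> M (low n M j) j /\ low n M j < n.
Proof. by case/andP=> /low_nonzero_col. Qed.

Lemma homogeneous_morse (M : mat) j : hom M j -> mi j = mi (low n M j).
Proof. by case/andP=> _ /eqP. Qed.

Lemma eq_homogeneous (M N : mat) j : (forall i, M i j = N i j) -> hom M j = hom N j.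
Proof. by move=> eqMN; rewrite /homogeneous (eq_nonzero_col _ eqMN) (eq_low _ eqMN). Qed.

Lemma pivcol_some M j i c : pivcol n m s M j i = Some c ->
  [/\ c < j, hom M c & low n M c = i].
Proof.
rewrite /pivcol; set p := (fun c => _); case: ifP => // lt_kj [<-].
have has_p : has p (iota 0 j) by rewrite has_find size_iota.
by have := nth_find 0 has_p; rewrite nth_iota // add0n => /andP [-> /eqP ->].
Qed.

Lemma pivcol_none M j i : pivcol n m s M j i = None ->
  forall c, c < j -> hom M c -> low n M c != i.
Proof.
rewrite /pivcol; set p := (fun c => _); case: ifP => // ge_kj _ c lt_cj homc.
apply/eqP=> low_c; have : has p (iota 0 j).
  by apply/hasP; exists c; [rewrite mem_iota | rewrite /p homc low_c eqxx].
by rewrite has_find size_iota ge_kj.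
Qed.

Lemma red_inner_other_col M j k i c : c != j -> red_inner n m s M j k i c = M i c.
Proof.
elim: k M => [|k IH] M neq_cj //=; rewrite IH // /red_step.
by case: (M k j) => //; case: pivcol => // c0; rewrite /addcol (negbTE neq_cj).
Qed.

Lemma red_outer_id A j i c : j <= c -> red_outer n m s A j i c = A i c.
Proof.
elim: j => [|j IH] le_jc //=; rewrite red_inner_other_col ?IH ?(ltnW le_jc) //.
by rewrite neq_ltn le_jc orbT.
Qed.

Lemma red_outer_stable A j j' i c :
  j <= j' -> c < j -> red_outer n m s A j' i c = red_outer n m s A j i c.
Proof.
elim: j' => [|j' IH]; first by rewrite leqn0 => /eqP ->.
rewrite leq_eqVlt => /orP [/eqP -> //| lt_jj'] lt_cj /=.
by rewrite red_inner_other_col ?IH // neq_ltn (leq_trans lt_cj lt_jj').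
Qed.

(* [M] is [M0] after the inner loop on column [j] has processed rows
   [k, k+1, ...]. *)
Definition inner_inv M0 j k M :=
  [/\ forall i c, c != j -> M i c = M0 i c,
      morse_upper M,
      exists2 T, valid_addends M0 j T & forall i, M i j = M0 i j (+) colsum M0 T i
    & forall c, c < j -> hom M0 c -> k <= low n M0 c -> M (low n M0 c) j = false].

Lemma inner_inv_init M0 j : morse_upper M0 ->
  inner_inv M0 j (if nonzero_col n M0 j then (low n M0 j).+1 else 0) M0.
Proof.
move=> upM0; split=> //.
  by exists [::] => // i; rewrite /colsum big_nil addbF.
move=> c _ /homogeneous_low [M0c lt_low_n]; case: ifP => [_|zero_j _].
  by move=> lt_lows; apply: entry_above_low lt_lows lt_low_n.
by apply/negP => /nonzero_colW/(_ lt_low_n); rewrite zero_j.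
Qed.

Lemma inner_inv_addcol M0 j k M c :
  inner_inv M0 j k.+1 M -> M k j -> pivcol n m s M j k = Some c ->
  inner_inv M0 j k (addcol M c j).
Proof.
case=> otherM upM [T addT colMj] cleared Mkj /pivcol_some [lt_cj homc lowc].
have eqcol c' : c' < j -> forall i, M i c' = M0 i c'.
  by move=> lt_c'j i; apply: otherM; rewrite neq_ltn lt_c'j.
have hom0c : hom M0 c by rewrite -(eq_homogeneous (eqcol _ lt_cj)).
have low0c : low n M0 c = k by rewrite -(eq_low _ (eqcol _ lt_cj)).
have [Mkc lt_kn] : M k c /\ k < n by rewrite -lowc; apply: homogeneous_low.
have mic : mi c = mi k by rewrite -lowc; apply: homogeneous_morse.
have [_ lt_jn le_kj] := upM _ _ Mkj.
split.
- by move=> i c' neq_c'j; rewrite /addcol (negbTE neq_c'j); apply: otherM.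
- move=> i c'; rewrite /addcol; case: eqP => [->|_]; last exact: upM.
  case Mij: (M i j) => /=; first by move=> _; apply: upM Mij.
  by case/upM=> lt_in _ le_ic; split=> //; rewrite (le_trans le_ic) ?mic.
- exists (c :: T).
    by move=> c'; rewrite inE => /orP [/eqP -> | /addT //]; rewrite mic.
  move=> i; rewrite /addcol eqxx colMj /colsum big_cons eqcol //.
  by case: (M0 i j); case: (M0 i c); case: (\big[_/_]_(_ <- _) _).
- move=> c' lt_c'j homc'; rewrite leq_eqVlt => /orP [/eqP <-|lt_k].
    by rewrite /addcol eqxx Mkj Mkc.
  have [_ lt_low'] := homogeneous_low homc'.
  rewrite /addcol eqxx cleared // eqcol //.
  by rewrite (@entry_above_low n M0 (low n M0 c') c) ?low0c.
Qed.

Lemma inner_inv_step M0 j k M :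
  inner_inv M0 j k.+1 M -> inner_inv M0 j k (red_step n m s M j k).
Proof.
move=> invM; rewrite /red_step; case Mkj: (M k j); last first.
  case: invM => otherM upM addM cleared; split=> // c lt_cj homc.
  by rewrite leq_eqVlt => /orP [/eqP <- | /(cleared c lt_cj homc)].
case pc: pivcol => [c|]; first exact: inner_inv_addcol pc.
case: invM => otherM upM addM cleared; split=> // c lt_cj homc.
rewrite leq_eqVlt => /orP [/eqP low_c | /(cleared c lt_cj homc) //].
have eqcol i : M i c = M0 i c by apply: otherM; rewrite neq_ltn lt_cj.
have := pivcol_none pc lt_cj; rewrite (eq_homogeneous eqcol) (eq_low _ eqcol).
by rewrite -low_c eqxx => /(_ homc).
Qed.

Lemma inner_inv_red_inner M0 j k M :
  inner_inv M0 j k M -> inner_inv M0 j 0 (red_inner n m s M j k).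
Proof. by elim: k M => [|k IH] M invM //=; apply/IH/inner_inv_step. Qed.

Section Reduced.
Variable A : mat.
Hypothesis upA : morse_upper A.
Local Notation R := (conmat_reduce n m s A).

Lemma red_outer_morse_upper j : morse_upper (red_outer n m s A j).
Proof.
by elim: j => [|j IH] //=; have [] := inner_inv_red_inner (inner_inv_init j IH).
Qed.

Lemma conmat_morse_upper : morse_upper R.
Proof. exact: red_outer_morse_upper. Qed.

Lemma conmat_stable j c i : j <= n -> c < j -> R i c = red_outer n m s A j i c.
Proof. exact: red_outer_stable. Qed.

Lemma conmat_col_colsum j : j < n ->
  exists2 T, valid_addends R j T & forall i, R i j = A i j (+) colsum R T i.
Proof.
move=> lt_jn; set Mj := red_outer n m s A j.
have eqcol c : c < j -> forall i, R i c = Mj i c.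
  by move=> lt_cj i; apply: conmat_stable; first exact: ltnW.
have [_ _ [T addT colj] _] :=
  inner_inv_red_inner (inner_inv_init j (@red_outer_morse_upper j)).
exists T => [c /addT [lt_cj homc le_cj] | i].
  by rewrite (eq_homogeneous (eqcol _ lt_cj)).
rewrite (conmat_stable i lt_jn (ltnSn j)) /= colj red_outer_id //.
congr addb; rewrite /colsum !big_seq; apply: eq_bigr => c /addT [lt_cj _ _].
by rewrite eqcol.
Qed.

Lemma conmat_pivot_cleared j c : j < n -> c < j -> hom R c -> R (low n R c) j = false.
Proof.
move=> lt_jn lt_cj homc.
have eqc i : R i c = red_outer n m s A j i c by apply: conmat_stable (ltnW lt_jn) lt_cj.
have [_ _ _ cleared] :=
  inner_inv_red_inner (inner_inv_init j (@red_outer_morse_upper j)).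
rewrite (conmat_stable _ lt_jn (ltnSn j)) (eq_low _ eqc) /= cleared //.
by rewrite -(eq_homogeneous eqc).
Qed.

Lemma conmat_low_inj c1 c2 : hom R c1 -> hom R c2 -> low n R c1 = low n R c2 -> c1 = c2.
Proof.
wlog lt_c12 : c1 c2 / c1 < c2.
  move=> W hom1 hom2 eq_low12; case: (ltngtP c1 c2) => [lt_c12|lt_c21|//].
    exact: W.
  exact/esym/W.
move=> hom1 /homogeneous_low [R2 lt_low2] eq_low12.
have [_ lt_c2n _] := conmat_morse_upper R2.
by rewrite -eq_low12 conmat_pivot_cleared in R2.
Qed.

(* The largest pivot among the columns occurring an odd number of times in [T]
   would survive in the sum. *)
Lemma conmat_colsum_eq0 T : (forall c, c \in T -> hom R c) ->
  (forall c, c \in T -> colsum R T (low n R c) = false) -> forall i, colsum R T i = false.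
Proof.
move=> homT vanT.
suff: forall b T, (forall c, c \in T -> hom R c /\ low n R c < b) ->
    (forall c, c \in T -> colsum R T (low n R c) = false) -> forall i, colsum R T i = false.
  move=> /(_ n T); apply=> // c /homT homc; split=> //.
  by have [] := homogeneous_low homc.
elim=> [|b IH] {homT vanT}T homT vanT i.
  case: T homT vanT => [|c T] homT _; first by rewrite /colsum big_nil.
  by case: (homT c (mem_head _ _)).
have lt_low_b c : c \in T -> low n R c != b -> low n R c < b.
  by move=> /homT [_]; rewrite ltnS leq_eqVlt => /orP [/eqP ->|]; rewrite ?eqxx.
case: (boolP (has (fun c => low n R c == b) T)) =>
  [/hasP [c0 Tc0 /eqP low_c0] | /hasPn no_b].
  set T1 := filter (predC1 c0) T.
  have T1_sub c : c \in T1 -> c \in T /\ c != c0 by rewrite mem_filter => /andP [].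
  have homT1 c : c \in T1 -> hom R c /\ low n R c < b.
    move=> /T1_sub [Tc neq_cc0]; have [homc _] := homT c Tc; split=> //.
    apply: lt_low_b Tc _; rewrite -low_c0; apply: contra neq_cc0 => /eqP eq_low.
    by apply/eqP/conmat_low_inj => //; exact: (homT c0 Tc0).1.
  have [Rc0 lt_bn] := homogeneous_low (homT c0 Tc0).1; rewrite low_c0 in Rc0 lt_bn.
  have T1_b : colsum R T1 b = false.
    rewrite /colsum big1_seq // => c /andP [_ /homT1 [_ lt_cb]].
    exact: entry_above_low lt_cb lt_bn.
  case odd_c0: (odd (count_mem c0 T)).
    by have := vanT c0 Tc0; rewrite low_c0 (colsum_parity _ _ c0) odd_c0 Rc0 T1_b.
  have eqT1 k : colsum R T k = colsum R T1 k by rewrite (colsum_parity _ _ c0) odd_c0.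
  by rewrite eqT1; apply: IH => // c /T1_sub [Tc _]; rewrite -eqT1; apply: vanT.
apply: IH => // c Tc; split; first exact: (homT c Tc).1.
exact: lt_low_b Tc (no_b c Tc).
Qed.

End Reduced.
End Reduction.

Lemma morse_fixed_sym (V : finType) (d : Order.disp_t) (P : finPOrderType d)
    (K : {set {set V}}) (m : {set V} -> P) (s t : seq {set V}) :
  morse_fixed K m s t -> morse_fixed K m t s.
Proof. by move=> fixed x y Kx Ky eq_m; rewrite fixed. Qed.

Lemma boundary_morse_upper (V : finType) (K : {set {set V}}) (Vs : {set {set {set V}}})
    (d : Order.disp_t) (P : finPOrderType d) (m : {set V} -> P) (s : seq {set V}) :
  morse_decomposition K Vs m -> [set x in s] = K ->
  morse_upper m (size s) s (boundary_matrix s).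
Proof.
move=> morse s_K i j /and3P [lt_in lt_jn /andP [sub_ij _]]; split=> //.
have K_nth k : k < size s -> nth set0 s k \in K by move=> lt_k; rewrite -s_K inE mem_nth.
apply: (morse (nth set0 s j) [:: nth set0 s i]).
by rewrite /mv_path K_nth //= andbT /Fmv inE /cl inE K_nth ?sub_ij ?orbT.
Qed.

Definition morse_ordered (V : finType) (d : Order.disp_t) (P : finPOrderType d)
    (m : {set V} -> P) (s : seq {set V}) : Prop :=
  exists le : rel P, linear_extension le /\
    forall i j, i < size s -> j < size s -> i <= j -> le (m (nth set0 s i)) (m (nth set0 s j)).

Section Transfer.
Variables (V : finType) (d : Order.disp_t) (P : finPOrderType d) (m : {set V} -> P)
  (K : {set {set V}}) (s t : seq {set V}).
Hypotheses (uniq_s : uniq s) (uniq_t : uniq t).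
Hypotheses (s_K : [set x in s] = K) (t_K : [set x in t] = K).
Hypothesis t_sorted : morse_ordered m t.
Hypothesis fixed : morse_fixed K m s t.

Local Notation n := (size s).
Local Notation mi i := (m (nth set0 s i)).
Local Notation pi i := (index (nth set0 s i) t).

Lemma enum_mem_eq x : (x \in s) = (x \in t).
Proof. by rewrite -[x \in s]in_set -[x \in t]in_set s_K t_K. Qed.

Lemma enum_size_eq : size t = n.
Proof. by apply/esym/perm_size/uniq_perm => // x; apply: enum_mem_eq. Qed.

Lemma pi_lt i : i < n -> pi i < n.
Proof. by move=> lt_in; rewrite -enum_size_eq index_mem -enum_mem_eq mem_nth. Qed.

Lemma nth_pi i : i < n -> nth set0 t (pi i) = nth set0 s i.
Proof. by move=> lt_in; rewrite nth_index // -enum_mem_eq mem_nth. Qed.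

Lemma ltn_pi c j : c < n -> j < n -> (mi c <= mi j)%O -> c < j -> pi c < pi j.
Proof.
move=> lt_cn lt_jn le_cj lt_cj.
have K_nth k : k < n -> nth set0 s k \in K by move=> lt_k; rewrite -s_K inE mem_nth.
have [eq_m | neq_m] := eqVneq (mi c) (mi j).
  by rewrite -fixed ?K_nth // !index_uniq.
rewrite ltnNge; apply/negP => le_pi.
have [le [[_ [anti_le [_ [_ ext_le]]]] sorted_t]] := t_sorted.
have := sorted_t _ _ _ _ le_pi; rewrite enum_size_eq !pi_lt // !nth_pi //.
move=> /(_ isT isT) le_jc.
by move: neq_m; rewrite (anti_le _ _ (introT andP (conj (ext_le _ _ le_cj) le_jc))) eqxx.
Qed.

Lemma homogeneous_pi (M N : mat) j : morse_upper m n s M -> j < n ->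
  (forall i, i < n -> M i j = N (pi i) (pi j)) -> homogeneous n m s M j ->
  homogeneous n m t N (pi j) /\ low n N (pi j) = pi (low n M j).
Proof.
move=> upM lt_jn colj /andP [nz_j /eqP mi_low].
have [Ml lt_ln] := low_nonzero_col nz_j; set l := low n M j in Ml lt_ln mi_low *.
have Nl : N (pi l) (pi j) by rewrite -colj.
have nz'_j : nonzero_col n N (pi j) := nonzero_colW Nl (pi_lt lt_ln).
suff low_pij : low n N (pi j) = pi l.
  by rewrite /homogeneous nz'_j low_pij !nth_pi // mi_low eqxx.
apply/eqP; rewrite eqn_leq (leq_low Nl (pi_lt lt_ln)) andbT.
have [Nk lt_kn] := low_nonzero_col nz'_j; set k := low n N (pi j) in Nk lt_kn *.
have s_k : nth set0 t k \in s by rewrite enum_mem_eq mem_nth // enum_size_eq.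
set i := index (nth set0 t k) s.
have lt_in : i < n by rewrite index_mem.
have pi_i : pi i = k by rewrite nth_index // index_uniq // enum_size_eq.
have Mi : M i j by rewrite colj // pi_i.
have := leq_low Mi lt_in; rewrite leq_eqVlt => /orP [/eqP eq_il | lt_il].
  by rewrite -pi_i eq_il.
rewrite -pi_i ltnW // ltn_pi //.
by have [_ _ le_ij] := upM _ _ Mi; rewrite -mi_low.
Qed.

End Transfer.

Section Main.
Variables (V : finType) (K : {set {set V}}) (Vs : {set {set {set V}}})
  (d : Order.disp_t) (P : finPOrderType d) (m : {set V} -> P) (s s' : seq {set V}).
Hypotheses (uniq_s : uniq s) (uniq_s' : uniq s').
Hypotheses (s_K : [set x in s] = K) (s'_K : [set x in s'] = K).
Hypotheses (s_sorted : morse_ordered m s) (s'_sorted : morse_ordered m s').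
Hypothesis fixed : morse_fixed K m s s'.
Hypothesis morse : morse_decomposition K Vs m.

Local Notation n := (size s).
Local Notation pi i := (index (nth set0 s i) s').
Local Notation pi' i := (index (nth set0 s' i) s).
Local Notation R := (conmat_reduce n m s (boundary_matrix s)).
Local Notation R' := (conmat_reduce n m s' (boundary_matrix s')).

Let size_s' : size s' = n := enum_size_eq uniq_s uniq_s' s_K s'_K.
Let fixed' := morse_fixed_sym fixed.
Let upA : morse_upper m n s (boundary_matrix s) := boundary_morse_upper morse s_K.
Let upA' : morse_upper m n s' (boundary_matrix s').
Proof. by rewrite -size_s'; apply: boundary_morse_upper morse s'_K. Qed.
Let upR := conmat_morse_upper upA.
Let upR' := conmat_morse_upper upA'.
Let lt_pi := pi_lt uniq_s uniq_s' s_K s'_K.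

Lemma lt_pi' i : i < n -> pi' i < n.
Proof. rewrite -size_s'; exact: (pi_lt uniq_s' uniq_s s'_K s_K). Qed.

Lemma pi'K i : i < n -> pi' (pi i) = i.
Proof. by move=> lt_in; rewrite (nth_pi s_K s'_K) // index_uniq. Qed.

Lemma piK' i : i < n -> pi (pi' i) = i.
Proof. by move=> lt_in; rewrite (nth_pi s'_K s_K) ?size_s' // index_uniq ?size_s'. Qed.

Lemma boundary_pi i j : i < n -> j < n ->
  boundary_matrix s' (pi i) (pi j) = boundary_matrix s i j.
Proof.
by move=> lt_in lt_jn; rewrite /boundary_matrix size_s' !lt_pi // !(nth_pi s_K s'_K) // lt_in lt_jn.
Qed.

Lemma homogeneous_pi_col c : c < n ->
  (forall i, i < n -> R i c = R' (pi i) (pi c)) -> homogeneous n m s R c ->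
  homogeneous n m s' R' (pi c) /\ low n R' (pi c) = pi (low n R c).
Proof. exact: (homogeneous_pi uniq_s uniq_s' s_K s'_K s'_sorted fixed (N:=R') upR). Qed.

Lemma homogeneous_pi'_col c' : c' < n ->
  (forall i, i < n -> R i (pi' c') = R' (pi i) c') -> homogeneous n m s' R' c' ->
  homogeneous n m s R (pi' c').
Proof.
move=> lt_c'n colc' homc'.
have col' i : i < n -> R' i c' = R (pi' i) (pi' c').
  by move=> lt_in; rewrite colc' ?lt_pi' ?piK'.
have := @homogeneous_pi _ _ _ m K s' s uniq_s' uniq_s s'_K s_K s_sorted fixed' R' R c'.
by rewrite size_s' => /(_ upR' lt_c'n col' homc') [].
Qed.

Section Column.
Variable j : nat.
Hypothesis lt_jn : j < n.
Hypothesis IH : forall c, c < j -> forall i, i < n -> R i c = R' (pi i) (pi c).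

Lemma addend_pi' c' : c' < pi j -> homogeneous n m s' R' c' ->
  (m (nth set0 s' c') <= m (nth set0 s' (pi j)))%O ->
  [/\ pi' c' < j, pi (pi' c') = c' & homogeneous n m s R (pi' c')].
Proof.
move=> lt_c'j homc' le_c'j.
have lt_c'n : c' < n := ltn_trans lt_c'j (lt_pi lt_jn).
have lt_pc'j : pi' c' < j.
  have := @ltn_pi _ _ _ m K s' s uniq_s' uniq_s s'_K s_K s_sorted fixed' c' (pi j).
  by rewrite size_s' pi'K // => /(_ lt_c'n (lt_pi lt_jn) le_c'j lt_c'j).
split=> //; first exact: piK'.
by apply: homogeneous_pi'_col => // i lt_in; rewrite IH // piK'.
Qed.

Lemma col_diff_colsum : exists2 U,
    forall c, c \in U -> [/\ c < j, homogeneous n m s R c & pi c < pi j] &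
  forall i, i < n -> R i j (+) R' (pi i) (pi j) = colsum R U i.
Proof.
have [T addT colj] := conmat_col_colsum upA lt_jn.
have [T' addT' colj'] := conmat_col_colsum upA' (lt_pi lt_jn).
have addT'_pi' c' : c' \in T' ->
    [/\ pi' c' < j, pi (pi' c') = c' & homogeneous n m s R (pi' c')].
  by case/addT' => lt_c'j homc' le_c'j; apply: addend_pi'.
exists (T ++ [seq pi' c' | c' <- T']) => [c | i lt_in].
  rewrite mem_cat => /orP [/addT [lt_cj homc le_cj] | /mapP [c' T'c' ->]].
    have lt_cn := ltn_trans lt_cj lt_jn.
    by split=> //; apply: (ltn_pi uniq_s uniq_s' s_K s'_K s'_sorted fixed lt_cn lt_jn).
  have [lt_c'j _ _] := addT' c' T'c'.
  by have [lt_pc'j -> homc] := addT'_pi' c' T'c'.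
rewrite colj colj' boundary_pi // /colsum big_cat big_map.
have -> : \big[addb/false]_(c' <- T') R' (pi i) c' =
          \big[addb/false]_(c' <- T') R i (pi' c').
  by apply: eq_big_seq => c' /addT'_pi' [lt_pc'j pc' _]; rewrite IH // pc'.
by case: (boundary_matrix s i j); case: (\big[_/_]_(_ <- T) _); case: (\big[_/_]_(_ <- T') _).
Qed.

Lemma col_pi i : i < n -> R i j = R' (pi i) (pi j).
Proof.
have [U addU diff] := col_diff_colsum.
have homU c : c \in U -> homogeneous n m s R c by case/addU.
have vanU c : c \in U -> colsum R U (low n R c) = false.
  move=> Uc; have [lt_cj homc lt_pc] := addU c Uc.
  have [_ lt_low] := homogeneous_low homc.
  have [homc' low_c'] := homogeneous_pi_col (ltn_trans lt_cj lt_jn) (IH lt_cj) homc.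
  rewrite -diff // (conmat_pivot_cleared upA lt_jn lt_cj homc) -low_c'.
  by rewrite (conmat_pivot_cleared upA' (lt_pi lt_jn) lt_pc homc').
move=> lt_in; have := conmat_colsum_eq0 upA homU vanU i; rewrite -diff //.
by case: (R i j); case: (R' _ _).
Qed.

End Column.

Lemma conmat_pi j : j < n -> forall i, i < n -> R i j = R' (pi i) (pi j).
Proof.
elim/ltn_ind: j => j IH lt_jn.
by apply: col_pi => // c lt_cj; apply: IH (ltn_trans lt_cj lt_jn).
Qed.

Lemma conmat_homogeneous_pi j : j < n -> homogeneous n m s R j ->
  homogeneous n m s' R' (pi j) /\ low n R' (pi j) = pi (low n R j).
Proof. by move=> lt_jn; apply: homogeneous_pi_col (conmat_pi lt_jn). Qed.

End Main.

Theorem proposition6 (V : finType) (K : {set {set V}})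
    (Vs : {set {set {set V}}})
    (d : Order.disp_t) (P : finPOrderType d) (m : {set V} -> P)
    (s s' : seq {set V}) :
  simplicial_complex K ->
  multivector_field K Vs ->
  morse_decomposition K Vs m ->
  admissible K m s -> admissible K m s' ->
  morse_fixed K m s s' ->
  let n := size s in
  let Aout := conmat_reduce n m s (boundary_matrix s) in
  let A'out := conmat_reduce n m s' (boundary_matrix s') in
  (forall i j i' j', i < n -> j < n -> i' < n -> j' < n ->
     nth set0 s i = nth set0 s' i' -> nth set0 s j = nth set0 s' j' ->
     Aout i j = A'out i' j') /\
  (forall j l j' l', j < n -> l < n -> j' < n -> l' < n ->
     homogeneous n m s Aout j -> low n Aout j = l ->
     nth set0 s' j' = nth set0 s j -> nth set0 s' l' = nth set0 s l ->
     homogeneous n m s' A'out j' /\ low n A'out j' = l').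
Proof.
move=> _ _ morse [[uniq_s s_K] [s_sorted _]] [[uniq_s' s'_K] [s'_sorted _]] fixed.
move=> n Aout A'out.
have size_s' : size s' = n := enum_size_eq uniq_s uniq_s' s_K s'_K.
have index_nth i i' :
    i' < n -> nth set0 s' i' = nth set0 s i -> index (nth set0 s i) s' = i'.
  by move=> lt_i'n <-; rewrite index_uniq // size_s'.
have col_pi := conmat_pi uniq_s uniq_s' s_K s'_K s_sorted s'_sorted fixed morse.
split=> [i j i' j' lt_in lt_jn lt_i'n lt_j'n eq_i eq_j |
         j l j' l' lt_jn _ lt_j'n lt_l'n homj low_j eq_j eq_l].
  by rewrite /Aout /A'out col_pi // (index_nth i i') // (index_nth j j').
have [homj' low_j'] :=
  conmat_homogeneous_pi uniq_s uniq_s' s_K s'_K s_sorted s'_sorted fixed morse lt_jn homj.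
by rewrite /A'out -(index_nth j j') // low_j' low_j (index_nth l l').
Qed.
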